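(* Let $X$ be a simplicial set and let $S\subseteq X^\sharp$ be any set of non-degenerate simplices. Then there is a canonical simplicial map $\bigsqcup_{s\in S}\Delta[m_s]\to DX$ such that the square with top map $\sqcup_{s\in S}\rho_s:\bigsqcup_{s\in S}\Delta[n_s]\to\bigsqcup_{s\in S}\Delta[m_s]$, left map $(\bar s)_{s\in S}:\bigsqcup_{s\in S}\Delta[n_s]\to X$, and bottom map $\eta_X:X\to DX$ commutes. Equivalently, for each non-degenerate $x$, the composite $\eta_X\circ\bar x:\Delta[n_x]\to DX$ factors through $\rho_x:\Delta[n_x]\to\Delta[m_x]$.
   Context: Simplicial operators act on the right; $\bar x:\Delta[n]\to X$ is the representing map of an $n$-simplex $x$; $X^\sharp$ is the set of non-degenerate simplices and $n_x$ the degree of $x$; $\varepsilon_i:[0]\to[n]$ is $0\mapsto i$. A simplicial set is non-singular if every non-degenerate simplex has degreewise injective representing map. The desingularization $DX$ is the image of $X\to\prod_f Y$, $x\mapsto(f(x))_f$, over all quotient maps $f:X\to Y$ (maps $X\to X/R$ for operator-compatible families of equivalence relations) with $Y$ non-singular; $\eta_X:X\to DX$ is the corestriction. Enforcer: for $x\in X^\sharp$ of degree $n$, let $i\sim j$ iff $x\varepsilon_i=x\varepsilon_j$, $i\approx k$ iff some $j$ has $i\le k\le j$ and $i\sim j$, and $\simeq$ the equivalence relation generated by $\approx$; its classes are intervals, and $\rho_x:[n]\to[m_x]$ is the order-preserving surjection onto the ordered quotient $\{0,\dots,n\}/\simeq\cong[m_x]$ (also viewed as a map $\Delta[n]\to\Delta[m_x]$).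 *)

From Stdlib Require Import Relations ClassicalEpsilon.
From mathcomp Require Import all_boot.
Unset Printing Implicit Defensive.

(* Order-preserving maps [m] -> [n], where [m] = {0,...,m} = 'I_m.+1. *)
Record ordmap (m n : nat) := OMap {
  ofun :> 'I_m.+1 -> 'I_n.+1 ;
  omono : forall i j : 'I_m.+1, i <= j -> ofun i <= ofun j }.
Arguments ofun {m n} o _.
Arguments omono {m n} o {i j} _.

Definition oid (n : nat) : ordmap n n := @OMap n n id (fun i j h => h).

Definition ocomp {m n p} (g : ordmap n p) (f : ordmap m n) : ordmap m p :=
  @OMap m p (fun i => g (f i)) (fun i j h => omono g (omono f h)).

Definition eps {n : nat} (i : 'I_n.+1) : ordmap 0 n :=
  @OMap 0 n (fun _ => i) (fun _ _ _ => leqnn i).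

Record sset := SSet {
  sx :> nat -> Type ;
  sact : forall m n, ordmap m n -> sx n -> sx m }.
Arguments sact {s m n}.

(* The simplicial identities (functoriality), maps compared extensionally. *)
Definition is_sset (X : sset) : Prop :=
  (forall n (x : X n), sact (oid n) x = x) /\
  (forall m n p (f : ordmap m n) (g : ordmap n p) (x : X p),
      sact (ocomp g f) x = sact f (sact g x)) /\
  (forall m n (f g : ordmap m n), (forall i, f i = g i) ->
      forall x : X n, sact f x = sact g x).

Record smap (X Y : sset) := SMap {
  smfun :> forall n, X n -> Y n ;
  smnat : forall m n (f : ordmap m n) (x : X n),
      smfun m (sact f x) = sact f (smfun n x) }.
Arguments smfun {X Y} s n _.
Arguments smnat {X Y} s {m n} f x.

Definition Delta (n : nat) : sset :=
  @SSet (fun k => ordmap k n) (fun k l f g => ocomp g f).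

Definition degenerate {X : sset} {n} (x : X n) : Prop :=
  exists m, m < n /\ exists (s : ordmap n m) (z : X m),
    (forall j, exists i, s i = j) /\ x = sact s z.

(* non-singular: every non-degenerate simplex y has a degreewise
   injective representing map ybar : Delta[n] -> Y, ybar_k(f) = y f *)
Definition nonsingular (Y : sset) : Prop :=
  forall n (y : Y n), ~ degenerate y ->
    forall k (f g : ordmap k n), sact f y = sact g y -> forall i, f i = g i.

Record crel (X : sset) := CRel {
  rel :> forall n, X n -> X n -> Prop ;
  rel_refl : forall n x, rel n x x ;
  rel_sym : forall n x y, rel n x y -> rel n y x ;
  rel_trans : forall n x y z, rel n x y -> rel n y z -> rel n x z ;
  rel_compat : forall m n (f : ordmap m n) x y,
      rel n x y -> rel m (sact f x) (sact f y) }.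
Arguments rel {X} c n _ _.

Definition qcar {X : sset} (R : crel X) (n : nat) : Type :=
  {P : X n -> Prop | exists x, P = rel R n x}.

Definition cls {X : sset} (R : crel X) {n} (x : X n) : qcar R n :=
  exist _ (rel R n x) (ex_intro _ x erefl).

Definition qrep {X : sset} {R : crel X} {n} (p : qcar R n) : X n :=
  proj1_sig (constructive_indefinite_description _ (proj2_sig p)).

Definition quot {X : sset} (R : crel X) : sset :=
  @SSet (qcar R) (fun m n f p => cls R (sact f (qrep p))).

Definition NSIndex (X : sset) : Type := {R : crel X | nonsingular (quot R)}.

(* DX = image of X -> prod_{R} X/R, x |-> (class of x)_R *)
Definition Dcar (X : sset) (n : nat) : Type :=
  {p : forall I : NSIndex X, qcar (proj1_sig I) n |
     exists x : X n, p = fun I => cls (proj1_sig I) x}.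

Definition etaX {X : sset} {n} (x : X n) : Dcar X n :=
  exist _ (fun I => cls (proj1_sig I) x) (ex_intro _ x erefl).

Definition Drep {X : sset} {n} (p : Dcar X n) : X n :=
  proj1_sig (constructive_indefinite_description _ (proj2_sig p)).

Definition DX (X : sset) : sset :=
  @SSet (Dcar X) (fun m n f p => etaX (sact f (Drep p))).

Definition vsim {X : sset} {n} (x : X n) (i j : 'I_n.+1) : Prop :=
  sact (eps i) x = sact (eps j) x.

Definition vapprox {X : sset} {n} (x : X n) (i k : 'I_n.+1) : Prop :=
  exists j : 'I_n.+1, i <= k <= j /\ vsim x i j.

Definition enf_equiv {X : sset} {n} (x : X n) : relation 'I_n.+1 :=
  clos_refl_sym_trans _ (vapprox x).

From Stdlib Require Import Relations ClassicalEpsilon.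
From Stdlib Require Import ProofIrrelevance FunctionalExtensionality PropExtensionality.
From mathcomp Require Import all_boot.

(* Take any section S of rho (it is automatically monotone) and let the
   factorization be eta o xbar o S.  It then remains to see that
   eta(x (S rho f)) = eta(x f), where S rho moves every vertex within its
   enforcer class.  Equality in DX is tested in every non-singular quotient
   Y of X; there the image y of x is z s with z non-degenerate, and
   non-singularity of Y forces s to identify vertices with y eps_i = y eps_j,
   hence (s being monotone) whole enforcer classes.  So y (S rho f) = y f. *)

Lemma sig_eq (A : Type) (P : A -> Prop) (a b : {x : A | P x}) :
  proj1_sig a = proj1_sig b -> a = b.
Proof. apply: eq_sig_hprop => *; exact: proof_irrelevance. Qed.

Definition smap_comp {X Y Z : sset} (g : smap Y Z) (f : smap X Y) : smap X Z :=
  @SMap X Z (fun n x => g n (f n x))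
    (fun m n h x => etrans (f_equal (g m) (smnat f h x)) (smnat g h (f n x))).

Definition Delta_map {m n} (s : ordmap m n) : smap (Delta m) (Delta n) :=
  @SMap (Delta m) (Delta n) (fun k h => ocomp s h) (fun k l f h => erefl).

Section SimplicialSet.
Context {X : sset} (HX : is_sset X).

Definition simplex_map {n} (x : X n) : smap (Delta n) X :=
  @SMap (Delta n) X (fun k f => sact f x) (fun k l f g => proj1 (proj2 HX) _ _ _ f g x).

Lemma act_ext k n (f g : ordmap k n) (x : X n) :
  (forall i, f i = g i) -> sact f x = sact g x.
Proof. by move=> fg; apply: (proj2 (proj2 HX)). Qed.

Lemma ex_nondegenerate_act n (y : X n) :
  exists q (s : ordmap n q) (z : X q), ~ degenerate z /\ y = sact s z.
Proof.
have [Hid [Hcomp _]] := HX.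
suff: forall q (s : ordmap n q) z, y = sact s z ->
    exists q (s : ordmap n q) (z : X q), ~ degenerate z /\ y = sact s z.
  by move=> /(_ n (oid n) y); rewrite Hid; apply.
elim/ltn_ind=> q IH s z yE.
case: (classic (degenerate z)) => [[p [ltpq [t [w [_ zE]]]]] | ndz].
- by apply: (IH p ltpq (ocomp t s) w); rewrite Hcomp -zE.
- by exists q, s, z.
Qed.

Lemma smap_enf_equiv {Y : sset} (phi : smap X Y) n (x : X n) i j :
  enf_equiv x i j -> enf_equiv (phi n x) i j.
Proof.
elim=> {i j} [i k [j [ikj xij]] | i | i j _ IH | i j l _ IHij _ IHjl].
- apply: rst_step; exists j; split=> //.
  by rewrite /vsim -!smnat xij.
- exact: rst_refl.
- exact: rst_sym.
- exact: rst_trans IHjl.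
Qed.

Hypothesis NSX : nonsingular X.

Lemma nondegenerate_act_enf_equiv n q (s : ordmap n q) (z : X q) i j :
  ~ degenerate z -> enf_equiv (sact s z) i j -> s i = s j.
Proof.
move=> ndz; have Hcomp := proj1 (proj2 HX).
elim=> {i j} [i k [j [/andP [ik kj] sij]] | // | i j _ -> // | i j l _ -> _ -> //].
have {}sij : s i = s j.
  apply: (NSX _ _ ndz _ (ocomp s (eps i)) (ocomp s (eps j)) _ ord0).
  by rewrite !Hcomp.
apply: val_inj; apply/eqP; rewrite eqn_leq (omono s ik) /=.
by rewrite sij (omono s kj).
Qed.

Lemma nonsingular_act_enf_equiv n (y : X n) k (f g : ordmap k n) :
  (forall i, enf_equiv y (f i) (g i)) -> sact f y = sact g y.
Proof.
have [q [s [z [ndz ->]]]] := ex_nondegenerate_act _ y.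
move=> fg; rewrite -!(proj1 (proj2 HX)); apply: act_ext => i /=.
exact: nondegenerate_act_enf_equiv ndz (fg i).
Qed.

End SimplicialSet.

Arguments rel_refl {X} c {n} x.
Arguments rel_sym {X} c {n x y} _.
Arguments rel_trans {X} c {n x y z} _ _.
Arguments rel_compat {X} c {m n} f {x y} _.

Section Quotient.
Context {X : sset} (R : crel X).

Lemma cls_eq n (y y' : X n) : R n y y' -> cls R y = cls R y'.
Proof.
move=> yy'; apply: sig_eq; apply: functional_extensionality => w /=.
apply: propositional_extensionality; split=> [yw | y'w].
- exact (rel_trans R (rel_sym R yy') yw).
- exact (rel_trans R yy' y'w).
Qed.

Lemma qrep_rel n (y : X n) : R n (qrep (cls R y)) y.
Proof.
rewrite /qrep; case: constructive_indefinite_description => w /= E.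
by rewrite -E; apply: rel_refl.
Qed.

Lemma cls_qrep {n} (p : qcar R n) : cls R (qrep p) = p.
Proof.
rewrite /qrep; case: constructive_indefinite_description => w /= E.
exact: sig_eq.
Qed.

Lemma quot_act_cls {k n} (f : ordmap k n) (y : X n) :
  @sact (quot R) _ _ f (cls R y) = cls R (sact f y).
Proof. exact/cls_eq/rel_compat/qrep_rel. Qed.

Definition quot_map : smap X (quot R) :=
  @SMap X (quot R) (fun n => @cls X R n) (fun m n f y => esym (quot_act_cls f y)).

Lemma is_sset_quot : is_sset X -> is_sset (quot R).
Proof.
move=> [Hid [Hcomp Hext]]; split; [|split] => [n p | m n q f g p | m n f g fg p];
  rewrite -(cls_qrep p) !quot_act_cls.
- by rewrite Hid.
- by rewrite Hcomp.
- by rewrite (Hext _ _ f g fg).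
Qed.

End Quotient.

Section Desingularization.
Context {X : sset}.

Lemma etaX_eq n (y y' : X n) :
  (forall I : NSIndex X, cls (proj1_sig I) y = cls (proj1_sig I) y') -> etaX y = etaX y'.
Proof. by move=> yy'; apply: sig_eq; apply: functional_extensionality_dep. Qed.

Lemma cls_Drep {n} (p : Dcar X n) (I : NSIndex X) : cls (proj1_sig I) (Drep p) = proj1_sig p I.
Proof. by rewrite /Drep; case: constructive_indefinite_description => w /= ->. Qed.

Lemma etaX_act {k n} (f : ordmap k n) (y : X n) :
  etaX (sact f y) = @sact (DX X) _ _ f (etaX y).
Proof.
apply: etaX_eq => I /=.
by rewrite -!quot_act_cls cls_Drep.
Qed.

Definition eta_map : smap X (DX X) := @SMap X (DX X) (fun n => @etaX X n) (@etaX_act).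

Hypothesis HX : is_sset X.

Lemma etaX_act_enf_equiv n (x : X n) k (f g : ordmap k n) :
  (forall i, enf_equiv x (f i) (g i)) -> etaX (sact f x) = etaX (sact g x).
Proof.
move=> fg; apply: etaX_eq => -[R NSR] /=.
rewrite -!quot_act_cls; apply: (nonsingular_act_enf_equiv (is_sset_quot R HX) NSR).
by move=> i; exact: (smap_enf_equiv (quot_map R)).
Qed.

End Desingularization.

Lemma ordmap_section {n m} (rho : ordmap n m) :
  (forall j, exists i, rho i = j) -> exists s : ordmap m n, forall j, rho (s j) = j.
Proof.
move=> rho_surj.
have rho_surjb (j : 'I_m.+1) : exists i, rho i == j by have [i <-] := rho_surj j; exists i.
pose s0 j := xchoose (rho_surjb j).
have rho_s0 j : rho (s0 j) = j by apply/eqP; exact: (xchooseP (rho_surjb j)).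
have s0_mono (j j' : 'I_m.+1) : j <= j' -> s0 j <= s0 j'.
  move=> jj'; rewrite leqNgt; apply/negP=> lt_s0.
  have := omono rho (ltnW lt_s0); rewrite !rho_s0 => j'j.
  have ejj' : j = j' by apply: val_inj; apply/eqP; rewrite eqn_leq jj' j'j.
  by move: lt_s0; rewrite ejj' ltnn.
by exists (@OMap m n s0 s0_mono).
Qed.

Theorem mainTheorem5 (X : sset) (HX : is_sset X) (n : nat) (x : X n)
  (Hx : ~ degenerate x)
  (m : nat) (rho : ordmap n m)
  (rho_surj : forall j : 'I_m.+1, exists i, rho i = j)
  (rho_ker : forall i j : 'I_n.+1, rho i = rho j <-> enf_equiv x i j) :
  exists g : smap (Delta m) (DX X),
    forall k (f : ordmap k n),
      g k (ocomp rho f) = etaX (sact f x).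
Proof.
have [s rho_s] := ordmap_section rho rho_surj.
exists (smap_comp eta_map (smap_comp (simplex_map HX x) (Delta_map s))) => k f /=.
apply: (etaX_act_enf_equiv HX) => i /=.
by apply/rho_ker; rewrite rho_s.
Qed.
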